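(* Let $\Delta$ be a saturated sample set. For every basic term $t$, every valuation $\theta$, and every $\Delta$-diagram $\delta$: if $\theta(x)$ strongly extends $\delta_x$ for every term variable $x$, then $[\![t]\!]_\theta$ strongly extends $\delta_t$.
   Context: Time warps: $\overline{\omega}=\omega\cup\{\omega\}$ with its natural order; a time warp is a monotone $f\colon\overline\omega\to\overline\omega$ with $f(0)=0$, $f(\omega)=\bigvee_{n\in\omega}f(n)$; $W$ is the set of time warps ordered pointwise, $fg:=f\circ g$, $\mathrm{id}$ identity, $\bot$ constant $0$, $\top$ maps $p\neq0$ to $\omega$. Residuals $\backslash,/$ on $W$ satisfy $f\le h/g\iff fg\le h\iff g\le f\backslash h$; $f^{\ell}:=\mathrm{id}/f$, $f^{r}:=f\backslash\mathrm{id}$, $f^{o}:=\top\backslash f$; $\mathrm{last}(f):=\bigwedge\{p\in\overline\omega\mid f(p)=f(\omega)\}$. Basic terms: $t,u::=x\mid tu\mid t^{o}\mid t^{\ell}\mid t^{r}\mid\mathrm{id}\mid\bot$ ($x$ a term variable). A valuation $\theta$ maps term variables to $W$; $[\![x]\!]_\theta=\theta(x)$, $[\![tu]\!]_\theta=[\![t]\!]_\theta[\![u]\!]_\theta$, $[\![t^{\star}]\!]_\theta=([\![t]\!]_\theta)^{\star}$ for $\star\in\{o,\ell,r\}$, $[\![\mathrm{id}]\!]_\theta=\mathrm{id}$, $[\![\bot]\!]_\theta=\bot$. Samples: $\alpha::=\kappa\mid t[\alpha]\mid\mathsf{s}(\alpha)\mid\mathsf{p}(\alpha)\mid\mathsf{last}(t)$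 ($\kappa$ a time variable, $t$ a basic term). Relation $\leadsto$: $t[\alpha]\leadsto\alpha$; $\mathsf{s}(\alpha)\leadsto\alpha$; $\mathsf{p}(\alpha)\leadsto\alpha$; $(tu)[\alpha]\leadsto t[u[\alpha]]$; $t^{o}[\alpha]\leadsto t[\alpha]$; $t^{r}[\alpha]\leadsto t[t^{r}[\alpha]], t[\mathsf{s}(t^{r}[\alpha])]$; $t^{\ell}[\alpha]\leadsto t[t^{\ell}[\alpha]], t[\mathsf{p}(t^{\ell}[\alpha])]$; $t[\alpha]\leadsto t[\mathsf{last}(t)]$. A sample set is saturated if closed under $\leadsto$. For $p\in\overline\omega$: $p\ominus1=p-1$ if $p\in\omega\setminus\{0\}$, else $p$; $p\oplus1=p+1$ if $p\in\omega$, else $p$. For a saturated sample set $\Delta$, a $\Delta$-diagram is a map $\delta\colon\Delta\to\overline\omega$ such that (all samples mentioned belonging to $\Delta$): (S1) $\delta(\alpha)\le\delta(\beta)\Rightarrow\delta(t[\alpha])\le\delta(t[\beta])$; (S2) $\delta(\alpha)=0\Rightarrow\delta(t[\alpha])=0$; (S3) $\delta(\mathsf{p}(\alpha))=\delta(\alpha)\ominus1$; (S4) $\delta(\mathsf{s}(\alpha))=\delta(\alpha)\oplus1$; (S5) for $t[\alpha]\in\Delta$: $\delta(\mathsf{last}(t))\le\delta(\alpha)\iff\delta(t[\alpha])=\delta(t[\mathsf{last}(t)])$; (S6) $\delta(\mathsf{last}(t))=\omega\Rightarrow\delta(t[\mathsf{last}(t)])=\omega$; (L1) $\delta(\mathrm{id}[\alpha])=\delta(\alpha)$;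 (L2) if $\bot[\alpha]\in\Delta$ then $\delta(\mathsf{last}(\bot))=0$; (L3) $\delta((tu)[\alpha])=\delta(t[u[\alpha]])$; (L4) if $(tu)[\mathsf{last}(tu)]\in\Delta$ and $\delta(\mathsf{last}(tu))=\omega$ then $\delta(\mathsf{last}(t))=\delta(\mathsf{last}(u))=\omega$; (O1) $\delta(t^{o}[\alpha])\in\{0,\omega\}$; (O2) $\delta(\alpha)<\omega\Rightarrow(\delta(t^{o}[\alpha])=\omega\iff\delta(t[\alpha])=\omega)$; (O3) $\delta(\mathsf{last}(t^{o}))<\omega$; (O4) for $t[\alpha],t^{o}[\mathsf{last}(t^{o})]\in\Delta$: if $\delta(t^{o}[\mathsf{last}(t^{o})])<\omega$ and $\delta(\alpha)<\omega$ then $\delta(t[\alpha])<\omega$; (R1) $\delta(t[t^{r}[\alpha]])\le\delta(\alpha)$; (R2) for $t^{r}[\alpha]\in\Delta$: if $0<\delta(\alpha)<\omega$ and $\delta(t^{r}[\alpha])<\omega$ then $\delta(\alpha)<\delta(t[\mathsf{s}(t^{r}[\alpha])])$; (R3) for $t^{r}[\mathsf{last}(t^{r})]\in\Delta$: $\delta(\mathsf{last}(t^{r}))=\omega\Rightarrow\delta(\mathsf{last}(t))=\omega$; (R4) for $t^{r}[\mathsf{last}(t^{r})]\in\Delta$: $\delta(t^{r}[\mathsf{last}(t^{r})])<\omega\Rightarrow\delta(t[\mathsf{s}(t^{r}[\mathsf{last}(t^{r})])])=\omega$; (Λ1) for $t[t^{\ell}[\alpha]]\in\Delta$: $\delta(t^{\ell}[\alpha])<\omega\Rightarrow\delta(\alpha)\le\delta(t[t^{\ell}[\alpha]])$;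 (Λ2) for $t^{\ell}[\alpha]\in\Delta$: if $0<\delta(\alpha)<\omega$ and $\delta(t^{\ell}[\alpha])<\omega$ then $\delta(t[\mathsf{p}(t^{\ell}[\alpha])])<\delta(\alpha)$; (Λ3) for $t[t^{\ell}[\alpha]]\in\Delta$: if $\delta(\alpha)<\omega$ and $\delta(t^{\ell}[\alpha])=\omega$ then $\delta(t[t^{\ell}[\alpha]])<\delta(\alpha)$; (Λ4) for $t^{\ell}[\mathsf{last}(t^{\ell})]\in\Delta$: $\delta(\mathsf{last}(t^{\ell}))=\omega\Rightarrow\delta(\mathsf{last}(t))=\omega$; (Λ5) for $t^{\ell}[\mathsf{last}(t^{\ell})]\in\Delta$: $\delta(t^{\ell}[\mathsf{last}(t^{\ell})])<\omega\Rightarrow\delta(t[t^{\ell}[\mathsf{last}(t^{\ell})]])=\omega$. For a $\Delta$-diagram $\delta$ and basic term $t$, let $\delta_t:=\{(\delta(\alpha),\delta(t[\alpha]))\mid t[\alpha]\in\Delta\}$. A time warp $f$ extends $\delta_t$ if $f(i)=j$ for all $(i,j)\in\delta_t$, and strongly extends $\delta_t$ if moreover either $\delta_t=\emptyset$, or ($\delta_t\ne\emptyset$ and $\delta(\mathsf{last}(t))=\omega$ implies $\mathrm{last}(f)=\omega$). *)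

From Stdlib Require Import Arith ClassicalEpsilon.

Inductive wb : Type := Fin (n : nat) | Om.

Definition wle (p q : wb) : Prop :=
  match p, q with
  | Fin m, Fin n => m <= n
  | _, Om => True
  | Om, Fin _ => False
  end.

Definition wlt (p q : wb) : Prop := wle p q /\ p <> q.

Definition is_lub (S : wb -> Prop) (p : wb) : Prop :=
  (forall q, S q -> wle q p) /\ (forall r, (forall q, S q -> wle q r) -> wle p r).

Definition is_glb (S : wb -> Prop) (p : wb) : Prop :=
  (forall q, S q -> wle p q) /\ (forall r, (forall q, S q -> wle r q) -> wle r p).

Definition wpred (p : wb) : wb :=
  match p with Fin (S n) => Fin n | _ => p end.
Definition wsucc (p : wb) : wb :=
  match p with Fin n => Fin (S n) | Om => Om end.

Definition is_warp (f : wb -> wb) : Prop :=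
  (forall p q, wle p q -> wle (f p) (f q)) /\
  f (Fin 0) = Fin 0 /\
  is_lub (fun y => exists n, y = f (Fin n)) (f Om).

Definition fle (f g : wb -> wb) : Prop := forall p, wle (f p) (g p).

Definition wcomp (f g : wb -> wb) : wb -> wb := fun p => f (g p).
Definition wid : wb -> wb := fun p => p.
Definition wbot : wb -> wb := fun _ => Fin 0.
Definition wtop : wb -> wb := fun p => match p with Fin 0 => Fin 0 | _ => Om end.

(* Residuals on W, defined by their universal property:
   f <= h / g  <->  f g <= h  <->  g <= f \ h   (f, g ranging over W). *)
Definition rdiv (h g : wb -> wb) : wb -> wb :=
  epsilon (inhabits wid)
    (fun r => is_warp r /\ forall f, is_warp f -> (fle f r <-> fle (wcomp f g) h)).
Definition ldiv (f h : wb -> wb) : wb -> wb :=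
  epsilon (inhabits wid)
    (fun r => is_warp r /\ forall g, is_warp g -> (fle g r <-> fle (wcomp f g) h)).

Definition wl (f : wb -> wb) : wb -> wb := rdiv wid f.
Definition wr (f : wb -> wb) : wb -> wb := ldiv f wid.
Definition wo (f : wb -> wb) : wb -> wb := ldiv wtop f.

Definition wlast (f : wb -> wb) : wb :=
  epsilon (inhabits Om) (is_glb (fun p => f p = f Om)).

Inductive term : Type :=
| TVar (x : nat)
| TComp (t u : term)
| TO (t : term)
| TL (t : term)
| TR (t : term)
| TId
| TBot.

Fixpoint denote (theta : nat -> wb -> wb) (t : term) : wb -> wb :=
  match t with
  | TVar x => theta x
  | TComp t u => wcomp (denote theta t) (denote theta u)
  | TO t => wo (denote theta t)
  | TL t => wl (denote theta t)
  | TR t => wr (denote theta t)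
  | TId => wid
  | TBot => wbot
  end.

Inductive sample : Type :=
| SVar (k : nat)
| SApp (t : term) (a : sample)
| SS (a : sample)
| SP (a : sample)
| SLast (t : term).

Inductive leadsto : sample -> sample -> Prop :=
| lt_app t a : leadsto (SApp t a) a
| lt_s a : leadsto (SS a) a
| lt_p a : leadsto (SP a) a
| lt_comp t u a : leadsto (SApp (TComp t u) a) (SApp t (SApp u a))
| lt_o t a : leadsto (SApp (TO t) a) (SApp t a)
| lt_r1 t a : leadsto (SApp (TR t) a) (SApp t (SApp (TR t) a))
| lt_r2 t a : leadsto (SApp (TR t) a) (SApp t (SS (SApp (TR t) a)))
| lt_l1 t a : leadsto (SApp (TL t) a) (SApp t (SApp (TL t) a))
| lt_l2 t a : leadsto (SApp (TL t) a) (SApp t (SP (SApp (TL t) a)))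
| lt_last t a : leadsto (SApp t a) (SApp t (SLast t)).

Definition saturated (D : sample -> Prop) : Prop :=
  forall a b, D a -> leadsto a b -> D b.

Definition is_diagram (D : sample -> Prop) (d : sample -> wb) : Prop :=
  (forall t a b, D a -> D b -> D (SApp t a) -> D (SApp t b) ->
     wle (d a) (d b) -> wle (d (SApp t a)) (d (SApp t b))) /\
  (forall t a, D a -> D (SApp t a) -> d a = Fin 0 -> d (SApp t a) = Fin 0) /\
  (forall a, D a -> D (SP a) -> d (SP a) = wpred (d a)) /\
  (forall a, D a -> D (SS a) -> d (SS a) = wsucc (d a)) /\
  (forall t a, D a -> D (SApp t a) -> D (SLast t) -> D (SApp t (SLast t)) ->
     (wle (d (SLast t)) (d a) <-> d (SApp t a) = d (SApp t (SLast t)))) /\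
  (forall t, D (SLast t) -> D (SApp t (SLast t)) ->
     d (SLast t) = Om -> d (SApp t (SLast t)) = Om) /\
  (forall a, D a -> D (SApp TId a) -> d (SApp TId a) = d a) /\
  (forall a, D (SApp TBot a) -> D (SLast TBot) -> d (SLast TBot) = Fin 0) /\
  (forall t u a, D (SApp (TComp t u) a) -> D (SApp t (SApp u a)) ->
     d (SApp (TComp t u) a) = d (SApp t (SApp u a))) /\
  (forall t u, D (SApp (TComp t u) (SLast (TComp t u))) -> D (SLast (TComp t u)) ->
     D (SLast t) -> D (SLast u) ->
     d (SLast (TComp t u)) = Om -> d (SLast t) = Om /\ d (SLast u) = Om) /\
  (forall t a, D (SApp (TO t) a) ->
     d (SApp (TO t) a) = Fin 0 \/ d (SApp (TO t) a) = Om) /\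
  (forall t a, D a -> D (SApp (TO t) a) -> D (SApp t a) ->
     wlt (d a) Om -> (d (SApp (TO t) a) = Om <-> d (SApp t a) = Om)) /\
  (forall t, D (SLast (TO t)) -> wlt (d (SLast (TO t))) Om) /\
  (forall t a, D a -> D (SApp t a) -> D (SApp (TO t) (SLast (TO t))) ->
     wlt (d (SApp (TO t) (SLast (TO t)))) Om -> wlt (d a) Om ->
     wlt (d (SApp t a)) Om) /\
  (forall t a, D a -> D (SApp (TR t) a) -> D (SApp t (SApp (TR t) a)) ->
     wle (d (SApp t (SApp (TR t) a))) (d a)) /\
  (forall t a, D a -> D (SApp (TR t) a) -> D (SApp t (SS (SApp (TR t) a))) ->
     wlt (Fin 0) (d a) -> wlt (d a) Om -> wlt (d (SApp (TR t) a)) Om ->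
     wlt (d a) (d (SApp t (SS (SApp (TR t) a))))) /\
  (forall t, D (SApp (TR t) (SLast (TR t))) -> D (SLast (TR t)) -> D (SLast t) ->
     d (SLast (TR t)) = Om -> d (SLast t) = Om) /\
  (forall t, D (SApp (TR t) (SLast (TR t))) ->
     D (SApp t (SS (SApp (TR t) (SLast (TR t))))) ->
     wlt (d (SApp (TR t) (SLast (TR t)))) Om ->
     d (SApp t (SS (SApp (TR t) (SLast (TR t))))) = Om) /\
  (forall t a, D a -> D (SApp (TL t) a) -> D (SApp t (SApp (TL t) a)) ->
     wlt (d (SApp (TL t) a)) Om -> wle (d a) (d (SApp t (SApp (TL t) a)))) /\
  (forall t a, D a -> D (SApp (TL t) a) -> D (SApp t (SP (SApp (TL t) a))) ->
     wlt (Fin 0) (d a) -> wlt (d a) Om -> wlt (d (SApp (TL t) a)) Om ->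
     wlt (d (SApp t (SP (SApp (TL t) a)))) (d a)) /\
  (forall t a, D a -> D (SApp (TL t) a) -> D (SApp t (SApp (TL t) a)) ->
     wlt (d a) Om -> d (SApp (TL t) a) = Om ->
     wlt (d (SApp t (SApp (TL t) a))) (d a)) /\
  (forall t, D (SApp (TL t) (SLast (TL t))) -> D (SLast (TL t)) -> D (SLast t) ->
     d (SLast (TL t)) = Om -> d (SLast t) = Om) /\
  (forall t, D (SApp (TL t) (SLast (TL t))) ->
     D (SApp t (SApp (TL t) (SLast (TL t)))) ->
     wlt (d (SApp (TL t) (SLast (TL t)))) Om ->
     d (SApp t (SApp (TL t) (SLast (TL t)))) = Om).

Definition delta_t (D : sample -> Prop) (d : sample -> wb) (t : term) (i j : wb) : Prop :=
  exists a, D (SApp t a) /\ i = d a /\ j = d (SApp t a).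

Definition extends (D : sample -> Prop) (d : sample -> wb) (t : term) (f : wb -> wb) : Prop :=
  forall i j, delta_t D d t i j -> f i = j.

Definition strongly_extends (D : sample -> Prop) (d : sample -> wb) (t : term)
  (f : wb -> wb) : Prop :=
  extends D d t f /\
  ((forall i j, ~ delta_t D d t i j) \/
   ((exists i j, delta_t D d t i j) /\ (d (SLast t) = Om -> wlast f = Om))).

From Stdlib Require Import Arith Lia Classical ClassicalEpsilon FunctionalExtensionality Wf_nat.

(* The residuals are computed explicitly: [f^o n] is [Om] exactly where [f n] is, [f^r n]
   is the largest [q] with [f q <= n], [f^l n] the least [q] with [n <= f q], and all three
   are continued to [Om] by suprema.  Induction on [t] then shows that [denote theta t]
   agrees with [d] on every sample [t[a]]: at a finite argument the diagram axioms for [t]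
   (O1-O2, R1-R2, Λ1-Λ3) say precisely that [d (t[a])] is this max or min, at argument [Om]
   axiom S5 reduces [t[a]] to [t[last t]], and the condition on [last] propagates through
   L4, R3, Λ4 because the residuals of a warp [f] with [last f = Om] again have [last = Om]. *)

Lemma wle_refl p : wle p p.
Proof. destruct p; simpl; auto. Qed.

Lemma wle_trans p q r : wle p q -> wle q r -> wle p r.
Proof. destruct p, q, r; simpl; intros; auto; try lia; contradiction. Qed.

Lemma wle_antisym p q : wle p q -> wle q p -> p = q.
Proof. destruct p, q; simpl; intros; auto; try contradiction. f_equal; lia. Qed.

Lemma wle_Om p : wle p Om.
Proof. destruct p; simpl; auto. Qed.

Lemma Fin0_wle p : wle (Fin 0) p.
Proof. destruct p; simpl; auto; lia. Qed.

Lemma Om_wle p : wle Om p -> p = Om.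
Proof. destruct p; simpl; auto; contradiction. Qed.

Lemma wle_Fin_or_gt p m : wle p (Fin m) \/ wle (Fin (S m)) p.
Proof. destruct p; simpl; auto; lia. Qed.

Lemma Fin_wlt_Om n : wlt (Fin n) Om.
Proof. split; [exact I | discriminate]. Qed.

Lemma Fin_wlt_Fin m n : m < n -> wlt (Fin m) (Fin n).
Proof. split; simpl; [lia | intros [= E]; lia]. Qed.

Lemma wlt_wle_false p q : wlt p q -> wle q p -> False.
Proof. intros [Hpq Hne] Hqp. exact (Hne (wle_antisym _ _ Hpq Hqp)). Qed.

Lemma wlt_irrefl p : ~ wlt p p.
Proof. intros [_ H]. exact (H eq_refl). Qed.

Lemma glb_exists A : exists p, is_glb A p.
Proof.
  destruct (classic (exists n, A (Fin n))) as [HA|HA].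
  - destruct (dec_inh_nat_subset_has_unique_least_element (fun n => A (Fin n))
                (fun n => classic _) HA) as [n [[An Hmin] _]].
    exists (Fin n). split.
    + intros [m|] Am; simpl; auto.
    + intros r Hr. exact (Hr _ An).
  - exists Om. split; [|intros; apply wle_Om].
    intros [m|] Am; [exfalso; eauto | exact I].
Qed.

(* In a complete chain the supremum is the infimum of the upper bounds. *)
Lemma lub_exists A : exists p, is_lub A p.
Proof.
  destruct (glb_exists (fun r => forall q, A q -> wle q r)) as [p [Hlow Hgreat]].
  exists p. split.
  - intros q Aq. apply Hgreat. intros r Hr. exact (Hr _ Aq).
  - intros r Hr. exact (Hlow _ Hr).
Qed.

Definition wsup (A : wb -> Prop) : wb := epsilon (inhabits Om) (is_lub A).
Definition winf (A : wb -> Prop) : wb := epsilon (inhabits Om) (is_glb A).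

Lemma wsup_spec A : is_lub A (wsup A).
Proof. exact (epsilon_spec _ _ (lub_exists A)). Qed.

Lemma winf_spec A : is_glb A (winf A).
Proof. exact (epsilon_spec _ _ (glb_exists A)). Qed.

Lemma wsup_ub A q : A q -> wle q (wsup A).
Proof. apply (wsup_spec A). Qed.

Lemma wsup_least A r : (forall q, A q -> wle q r) -> wle (wsup A) r.
Proof. apply (wsup_spec A). Qed.

Lemma winf_lb A q : A q -> wle (winf A) q.
Proof. apply (winf_spec A). Qed.

Lemma winf_greatest A r : (forall q, A q -> wle r q) -> wle r (winf A).
Proof. apply (winf_spec A). Qed.

Lemma lub_gt A p m : is_lub A p -> wle (Fin (S m)) p ->
  exists x, A x /\ wle (Fin (S m)) x.
Proof.
  intros [_ Hleast] Hp. apply NNPP. intros Hno.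
  assert (Hb : wle p (Fin m)).
  { apply Hleast. intros q Aq. destruct (wle_Fin_or_gt q m) as [H|H]; [exact H|].
    exfalso; eauto. }
  pose proof (wle_trans _ _ _ Hp Hb). simpl in *; lia.
Qed.

Lemma top_of_all s : (forall m, wle (Fin m) s) -> s = Om.
Proof. intros H. destruct s as [m|]; auto. specialize (H (S m)). simpl in H. lia. Qed.

Lemma warp_mono f p q : is_warp f -> wle p q -> wle (f p) (f q).
Proof. intros [Hm _]; auto. Qed.

Lemma warp_0 f : is_warp f -> f (Fin 0) = Fin 0.
Proof. intros [_ [H0 _]]; exact H0. Qed.

Lemma warp_Om_le f r : is_warp f -> (forall n, wle (f (Fin n)) r) -> wle (f Om) r.
Proof. intros [_ [_ [_ Hleast]]] Hr. apply Hleast. intros y [n ->]. apply Hr. Qed.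

Lemma warp_gt f m : is_warp f -> wle (Fin (S m)) (f Om) ->
  exists n, wle (Fin (S m)) (f (Fin n)).
Proof.
  intros [_ [_ Hlub]] Hm. destruct (lub_gt _ _ _ Hlub Hm) as [x [[n ->] Hx]]. eauto.
Qed.

Lemma warp_Om_of_Fin f n : is_warp f -> f (Fin n) = Om -> f Om = Om.
Proof. intros Hf E. apply Om_wle. rewrite <- E at 1. apply (warp_mono f), wle_Om; exact Hf. Qed.

Lemma warp_intro f :
  (forall p q, wle p q -> wle (f p) (f q)) -> f (Fin 0) = Fin 0 ->
  (forall r, (forall n, wle (f (Fin n)) r) -> wle (f Om) r) -> is_warp f.
Proof.
  intros Hm H0 Hleast. split; [exact Hm | split; [exact H0 | split]].
  - intros y [n ->]. apply Hm, wle_Om.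
  - intros r Hr. apply Hleast. intro n. apply Hr. eauto.
Qed.

Lemma warp_Om_attained f : is_warp f -> f Om <> Om -> exists n, f (Fin n) = f Om.
Proof.
  intros Hf Hfin. destruct (f Om) as [[|k]|] eqn:E; [| |congruence].
  - exists 0. apply warp_0, Hf.
  - destruct (warp_gt f k Hf) as [n Hn]; [rewrite E; apply wle_refl|].
    exists n. apply wle_antisym; [rewrite <- E; apply warp_mono, wle_Om; exact Hf | exact Hn].
Qed.

Lemma fle_of_Fin g h : is_warp g -> is_warp h ->
  (forall n, wle (g (Fin n)) (h (Fin n))) -> fle g h.
Proof.
  intros Hg Hh H [n|]; [apply H|].
  apply warp_Om_le; [exact Hg|]. intro n.
  apply wle_trans with (h (Fin n)); [apply H | apply warp_mono, wle_Om; exact Hh].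
Qed.

Lemma last_Om_iff f : wlast f = Om <-> forall n, f (Fin n) <> f Om.
Proof.
  change (wlast f) with (winf (fun p => f p = f Om)). split.
  - intros E n Hn. pose proof (winf_lb (fun p => f p = f Om) _ Hn) as H. rewrite E in H. exact H.
  - intros H. apply Om_wle, winf_greatest. intros [n|] Hq; [exfalso; eapply H, Hq | exact I].
Qed.

Lemma warp_last_Om_iff f : is_warp f ->
  wlast f = Om <-> f Om = Om /\ forall n, f (Fin n) <> Om.
Proof.
  intros Hf. rewrite last_Om_iff. split.
  - intros H. assert (E : f Om = Om).
    { apply NNPP. intros Hfin. destruct (warp_Om_attained f Hf Hfin) as [n Hn]. exact (H n Hn). }
    split; [exact E | intro n; rewrite <- E; apply H].
  - intros [-> H]. exact H.
Qed.

Lemma wid_warp : is_warp wid.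
Proof.
  apply warp_intro; unfold wid; auto. intros r Hr. rewrite (top_of_all r Hr). apply wle_refl.
Qed.

Lemma wbot_warp : is_warp wbot.
Proof. apply warp_intro; unfold wbot; intros; [apply wle_refl | reflexivity | apply (H 0)]. Qed.

Lemma comp_warp f g : is_warp f -> is_warp g -> is_warp (wcomp f g).
Proof.
  intros Hf Hg. unfold wcomp. apply warp_intro.
  - intros p q H. apply (warp_mono f); [exact Hf|]. apply (warp_mono g); assumption.
  - rewrite (warp_0 g Hg). apply warp_0, Hf.
  - intros r Hr. destruct (classic (g Om = Om)) as [E|Hfin].
    + rewrite E. apply warp_Om_le; [exact Hf|]. intros k.
      destruct (warp_gt g k Hg) as [n Hn]; [rewrite E; apply wle_Om|].
      apply wle_trans with (f (g (Fin n))); [|apply Hr].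
      apply (warp_mono f); [exact Hf|]. apply wle_trans with (Fin (S k)); [simpl; lia | exact Hn].
    + destruct (warp_Om_attained g Hg Hfin) as [n <-]. apply Hr.
Qed.

Lemma last_comp f g : is_warp f -> is_warp g -> wlast f = Om -> wlast g = Om ->
  wlast (wcomp f g) = Om.
Proof.
  intros Hf Hg. rewrite (warp_last_Om_iff f Hf), (warp_last_Om_iff g Hg),
    (warp_last_Om_iff _ (comp_warp f g Hf Hg)).
  unfold wcomp. intros [Ef Hf'] [Eg Hg']. rewrite Eg. split; [exact Ef|].
  intro n. destruct (g (Fin n)) eqn:E; [apply Hf' | contradiction (Hg' n E)].
Qed.

Lemma residual_eq (C : (wb -> wb) -> Prop) g : is_warp g ->
  (forall h, is_warp h -> (fle h g <-> C h)) ->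
  epsilon (inhabits wid)
    (fun r => is_warp r /\ forall h, is_warp h -> (fle h r <-> C h)) = g.
Proof.
  intros Hg Hgu. set (r := epsilon _ _).
  destruct (epsilon_spec (inhabits wid)
    (fun r => is_warp r /\ forall h, is_warp h -> (fle h r <-> C h))
    (ex_intro _ g (conj Hg Hgu))) as [Hr Hru].
  fold r in Hr, Hru. apply functional_extensionality. intro p. apply wle_antisym.
  - apply (proj2 (Hgu r Hr)), Hru; [exact Hr|]. intro; apply wle_refl.
  - apply (proj2 (Hru g Hg)), Hgu; [exact Hg|]. intro; apply wle_refl.
Qed.

Definition seq_warp (s : nat -> wb) (p : wb) : wb :=
  match p with Fin n => s n | Om => wsup (fun y => exists n, y = s n) end.

Lemma seq_warp_warp s : s 0 = Fin 0 -> (forall m n, m <= n -> wle (s m) (s n)) ->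
  is_warp (seq_warp s).
Proof.
  intros H0 Hm. apply warp_intro; [|exact H0|].
  - intros [m|] [n|] H; simpl in *; try contradiction.
    + apply Hm, H.
    + apply wsup_ub; eauto.
    + apply wle_refl.
  - intros r Hr. apply wsup_least. intros y [n ->]. apply Hr.
Qed.

Lemma seq_warp_Om s : (forall m, exists n, wle (Fin m) (s n)) -> seq_warp s Om = Om.
Proof.
  intros H. apply top_of_all. intros m. destruct (H m) as [n Hn].
  apply wle_trans with (s n); [exact Hn | apply wsup_ub; eauto].
Qed.

Definition wo_expl (f : wb -> wb) (p : wb) : wb :=
  match p with
  | Fin n => if excluded_middle_informative (f (Fin n) = Om) then Om else Fin 0
  | Om => if excluded_middle_informative (exists n, f (Fin n) = Om) then Om else Fin 0
  end.

Lemma wo_expl_cases f p : wo_expl f p = Fin 0 \/ wo_expl f p = Om.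
Proof. destruct p; simpl; destruct excluded_middle_informative; auto. Qed.

Lemma wo_expl_warp f : is_warp f -> is_warp (wo_expl f).
Proof.
  intros Hf. apply warp_intro.
  - intros p q Hpq. destruct (wo_expl_cases f p) as [-> | Ep]; [apply Fin0_wle|].
    enough (wo_expl f q = Om) as -> by apply wle_Om.
    destruct p as [m|], q as [n|]; simpl in Hpq, Ep |- *; try contradiction;
      destruct excluded_middle_informative as [e|]; try discriminate; [| |exact Ep].
    + destruct excluded_middle_informative as [|Hne]; [reflexivity|].
      contradiction Hne. apply Om_wle. rewrite <- e. apply (warp_mono f); assumption.
    + destruct excluded_middle_informative as [|Hne]; [reflexivity|]. contradiction Hne. eauto.
  - simpl. destruct excluded_middle_informative as [e|]; [|reflexivity].
    rewrite (warp_0 f Hf) in e. discriminate.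
  - intros r Hr. simpl. destruct excluded_middle_informative as [[n e]|]; [|apply Fin0_wle].
    specialize (Hr n). simpl in Hr.
    destruct excluded_middle_informative; [exact Hr | contradiction].
Qed.

Lemma wo_expl_Om f p : is_warp f -> wo_expl f p = Om -> f p = Om.
Proof.
  intros Hf. destruct p as [n|]; simpl; destruct excluded_middle_informative as [e|];
    try discriminate; intros _; [exact e|].
  destruct e as [n e]. exact (warp_Om_of_Fin f n Hf e).
Qed.

Lemma wo_expl_Fin f n : wo_expl f (Fin n) = Om <-> f (Fin n) = Om.
Proof. simpl. destruct excluded_middle_informative; split; congruence. Qed.

Lemma wo_expl_Om_wlast f : is_warp f -> wo_expl f Om = Om -> wlast f = Om -> False.
Proof.
  intros Hf. simpl. destruct excluded_middle_informative as [[n En]|]; [|discriminate].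
  intros _ HL. apply (proj1 (last_Om_iff f) HL n).
  rewrite En. symmetry. exact (warp_Om_of_Fin f n Hf En).
Qed.

Lemma wtop_nonzero p : p <> Fin 0 -> wtop p = Om.
Proof. destruct p as [[|n]|]; simpl; congruence. Qed.

Lemma wo_expl_univ f : is_warp f ->
  forall h, is_warp h -> (fle h (wo_expl f) <-> fle (wcomp wtop h) f).
Proof.
  intros Hf h Hh. unfold wcomp. split.
  - intros H p. destruct (classic (h p = Fin 0)) as [-> | Hp]; [apply Fin0_wle|].
    rewrite (wtop_nonzero _ Hp), (wo_expl_Om f p Hf); [apply wle_refl|].
    destruct (wo_expl_cases f p) as [E|E]; [|exact E].
    specialize (H p). rewrite E in H.
    contradiction Hp. apply wle_antisym; [exact H | apply Fin0_wle].
  - intros H. apply fle_of_Fin; [exact Hh | apply wo_expl_warp, Hf|]. intro n.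
    destruct (wo_expl_cases f (Fin n)) as [E|E]; rewrite E; [|apply wle_Om].
    destruct (classic (h (Fin n) = Fin 0)) as [-> | Hn]; [apply wle_refl|].
    specialize (H (Fin n)); cbv beta in H. rewrite (wtop_nonzero _ Hn) in H.
    apply Om_wle, wo_expl_Fin in H. congruence.
Qed.

Lemma wo_eq f : is_warp f -> wo f = wo_expl f.
Proof. intros Hf. exact (residual_eq _ _ (wo_expl_warp f Hf) (wo_expl_univ f Hf)). Qed.

(* The case [n = 0] is forced: [max {q | f q <= 0}] may be positive, but [f^r] must fix 0. *)
Definition wr_expl (f : wb -> wb) : wb -> wb :=
  seq_warp (fun n => match n with 0 => Fin 0 | S _ => wsup (fun q => wle (f q) (Fin n)) end).

Definition wl_expl (f : wb -> wb) : wb -> wb :=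
  seq_warp (fun n => winf (fun q => wle (Fin n) (f q))).

Lemma warp_wsup_le f r : is_warp f -> wle (f (wsup (fun q => wle (f q) r))) r.
Proof.
  intros Hf. set (A := fun q => wle (f q) r).
  destruct (wsup A) as [[|m]|] eqn:E.
  - rewrite (warp_0 f Hf). apply Fin0_wle.
  - destruct (lub_gt A _ m (wsup_spec A)) as [x [Ax Hx]]; [rewrite E; apply wle_refl|].
    assert (x = Fin (S m)) as <-; [|exact Ax].
    apply wle_antisym; [rewrite <- E; apply wsup_ub, Ax | exact Hx].
  - apply warp_Om_le; [exact Hf|]. intro n.
    destruct (lub_gt A _ n (wsup_spec A)) as [x [Ax Hx]]; [rewrite E; apply wle_Om|].
    apply wle_trans with (f x); [|exact Ax].
    apply (warp_mono f); [exact Hf|]. apply wle_trans with (Fin (S n)); [simpl; lia | exact Hx].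
Qed.

Lemma wr_expl_warp f : is_warp f -> is_warp (wr_expl f).
Proof.
  intros Hf. apply seq_warp_warp; [reflexivity|].
  intros [|m] [|n] H; try lia; try apply Fin0_wle.
  apply wsup_least. intros q Hq. apply wsup_ub.
  apply wle_trans with (Fin (S m)); [exact Hq | simpl; lia].
Qed.

Lemma wr_expl_fle f n : is_warp f -> wle (f (wr_expl f (Fin n))) (Fin n).
Proof.
  intros Hf. destruct n as [|n]; simpl; [rewrite (warp_0 f Hf); apply wle_refl|].
  apply warp_wsup_le, Hf.
Qed.

Lemma wr_expl_univ f : is_warp f ->
  forall h, is_warp h -> (fle h (wr_expl f) <-> fle (wcomp f h) wid).
Proof.
  intros Hf h Hh. unfold wcomp, wid. split.
  - intros H [n|]; [|apply wle_Om].
    apply wle_trans with (f (wr_expl f (Fin n))).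
    + apply (warp_mono f), H; exact Hf.
    + apply wr_expl_fle, Hf.
  - intros H. apply fle_of_Fin; [exact Hh | apply wr_expl_warp, Hf|].
    intros [|n]; simpl; [rewrite (warp_0 h Hh); apply wle_refl|].
    apply wsup_ub, H.
Qed.

Lemma wr_eq f : is_warp f -> wr f = wr_expl f.
Proof. intros Hf. exact (residual_eq _ _ (wr_expl_warp f Hf) (wr_expl_univ f Hf)). Qed.

Lemma wl_expl_le f n q : wle (Fin n) (f q) -> wle (wl_expl f (Fin n)) q.
Proof. apply (winf_lb (fun q => wle (Fin n) (f q))). Qed.

Lemma wl_expl_warp f : is_warp f -> is_warp (wl_expl f).
Proof.
  intros Hf. apply seq_warp_warp.
  - apply wle_antisym; [apply winf_lb, Fin0_wle | apply Fin0_wle].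
  - intros m n H. apply winf_greatest. intros q Hq. apply winf_lb.
    apply wle_trans with (Fin n); [simpl; lia | exact Hq].
Qed.

Lemma wl_expl_univ f : is_warp f ->
  forall h, is_warp h -> (fle h (wl_expl f) <-> fle (wcomp h f) wid).
Proof.
  intros Hf h Hh. unfold wcomp, wid. split.
  - intros H q. apply wle_trans with (wl_expl f (f q)); [apply H|].
    destruct (f q) as [n|] eqn:E; [apply wl_expl_le; rewrite E; apply wle_refl|].
    apply warp_Om_le; [apply wl_expl_warp, Hf|]. intro n. apply wl_expl_le. rewrite E. apply wle_Om.
  - intros H. apply fle_of_Fin; [exact Hh | apply wl_expl_warp, Hf|].
    intro n. apply winf_greatest. intros q Hq.
    apply wle_trans with (h (f q)); [apply (warp_mono h); assumption | apply H].
Qed.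

Lemma wl_eq f : is_warp f -> wl f = wl_expl f.
Proof. intros Hf. exact (residual_eq _ _ (wl_expl_warp f Hf) (wl_expl_univ f Hf)). Qed.

Lemma wr_expl_val f n m : is_warp f -> wle (f (Fin m)) (Fin (S n)) ->
  wlt (Fin (S n)) (f (Fin (S m))) -> wr_expl f (Fin (S n)) = Fin m.
Proof.
  intros Hf Hm HSm. apply wle_antisym; [|apply wsup_ub, Hm].
  apply wsup_least. intros q Hq. destruct (wle_Fin_or_gt q m) as [H|H]; [exact H|].
  exfalso. apply (wlt_wle_false _ _ HSm).
  eapply wle_trans; [apply (warp_mono f _ _ Hf H) | exact Hq].
Qed.

Lemma wr_expl_Om f n : is_warp f -> wle (f Om) (Fin (S n)) -> wr_expl f (Fin (S n)) = Om.
Proof. intros Hf H. apply Om_wle, wsup_ub, H. Qed.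

Lemma wr_expl_Om_le f j : is_warp f -> f (Fin (S j)) = Om -> wle (wr_expl f Om) (Fin j).
Proof.
  intros Hf Hj. apply warp_Om_le; [apply wr_expl_warp, Hf|]. intro n.
  destruct (wle_Fin_or_gt (wr_expl f (Fin n)) j) as [H|H]; [exact H|].
  pose proof (wle_trans _ _ _ (warp_mono f _ _ Hf H) (wr_expl_fle f n Hf)) as Hle.
  rewrite Hj in Hle. contradiction.
Qed.

Lemma wlast_wr_expl f : is_warp f -> wlast f = Om -> wlast (wr_expl f) = Om.
Proof.
  intros Hf. rewrite (warp_last_Om_iff f Hf), (warp_last_Om_iff _ (wr_expl_warp f Hf)).
  intros [Ef Hfin]. split.
  - apply seq_warp_Om. intro m. destruct (f (Fin m)) as [l|] eqn:E; [|contradiction (Hfin m)].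
    exists (S l). apply wsup_ub. rewrite E. simpl; lia.
  - intros n E. pose proof (wr_expl_fle f n Hf) as H. rewrite E, Ef in H. contradiction.
Qed.

Lemma wl_expl_val f n m : is_warp f -> wlt (f (Fin m)) (Fin n) ->
  wle (Fin n) (f (Fin (S m))) -> wl_expl f (Fin n) = Fin (S m).
Proof.
  intros Hf Hm HSm. apply wle_antisym; [apply wl_expl_le, HSm|].
  apply winf_greatest. intros q Hq. destruct (wle_Fin_or_gt q m) as [H|H]; [|exact H].
  exfalso. apply (wlt_wle_false _ _ Hm).
  eapply wle_trans; [exact Hq | apply (warp_mono f _ _ Hf H)].
Qed.

Lemma wl_expl_Om f n : is_warp f -> wlt (f Om) (Fin n) -> wl_expl f (Fin n) = Om.
Proof.
  intros Hf H. apply Om_wle, winf_greatest. intros q Hq. exfalso.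
  apply (wlt_wle_false _ _ H). eapply wle_trans; [exact Hq | apply (warp_mono f), wle_Om; exact Hf].
Qed.

Lemma wl_expl_Om_le f j : is_warp f -> f (Fin j) = Om -> wle (wl_expl f Om) (Fin j).
Proof.
  intros Hf Hj. apply warp_Om_le; [apply wl_expl_warp, Hf|]. intro n.
  apply wl_expl_le. rewrite Hj. apply wle_Om.
Qed.

Lemma wlast_wl_expl f : is_warp f -> wlast f = Om -> wlast (wl_expl f) = Om.
Proof.
  intros Hf. rewrite (warp_last_Om_iff f Hf), (warp_last_Om_iff _ (wl_expl_warp f Hf)).
  intros [Ef Hfin]. split.
  - apply seq_warp_Om. intro m. destruct (f (Fin m)) as [l|] eqn:E; [|contradiction (Hfin m)].
    exists (S l). apply winf_greatest. intros q Hq.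
    destruct (wle_Fin_or_gt q m) as [H|H].
    + pose proof (wle_trans _ _ _ Hq (warp_mono f _ _ Hf H)) as Hle.
      rewrite E in Hle. simpl in Hle; lia.
    + apply wle_trans with (Fin (S m)); [simpl; lia | exact H].
  - intros n E. destruct (warp_gt f n Hf) as [k Hk]; [rewrite Ef; apply wle_Om|].
    pose proof (wl_expl_le f n (Fin k)) as H. rewrite E in H.
    apply H, wle_trans with (Fin (S n)); [simpl; lia | exact Hk].
Qed.

Lemma denote_warp theta : (forall x, is_warp (theta x)) -> forall t, is_warp (denote theta t).
Proof.
  intros Hw t. induction t; simpl.
  - apply Hw.
  - apply comp_warp; assumption.
  - rewrite (wo_eq _ IHt). apply wo_expl_warp, IHt.
  - rewrite (wl_eq _ IHt). apply wl_expl_warp, IHt.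
  - rewrite (wr_eq _ IHt). apply wr_expl_warp, IHt.
  - exact wid_warp.
  - exact wbot_warp.
Qed.

Section Diagram.

Variables (D : sample -> Prop) (d : sample -> wb).
Hypothesis Dsat : saturated D.
Hypothesis Hd : is_diagram D d.

Let Dstep : forall a b, D a -> leadsto a b -> D b := Dsat.

Local Ltac in_D := eauto 8 using Dstep, leadsto.

Local Ltac diagram_axioms :=
  destruct Hd as (S1 & S2 & S3 & S4 & S5 & S6 & L1 & L2 & L3 & L4 & O1 & O2 & O3 & O4
                  & R1 & R2 & R3 & R4 & Λ1 & Λ2 & Λ3 & Λ4 & Λ5).

Definition agrees (t : term) (f : wb -> wb) : Prop :=
  (forall a, D (SApp t a) -> f (d a) = d (SApp t a)) /\
  (forall a, D (SApp t a) -> d (SLast t) = Om -> wlast f = Om).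

Lemma strongly_extends_iff_agrees t f : strongly_extends D d t f <-> agrees t f.
Proof.
  split.
  - intros [Hext Hlast]. split.
    + intros a Ha. apply Hext. exists a. auto.
    + intros a Ha HL. destruct Hlast as [Hnone | [_ H]]; [|exact (H HL)].
      exfalso. apply (Hnone (d a) (d (SApp t a))). exists a; auto.
  - intros [Hval Hlast]. split.
    + intros i j (a & Ha & -> & ->). apply Hval, Ha.
    + destruct (classic (exists a, D (SApp t a))) as [[a Ha]|Hnone].
      * right. split; [exists (d a), (d (SApp t a)), a; auto | exact (Hlast a Ha)].
      * left. intros i j (a & Ha & _). eauto.
Qed.

Lemma agrees_TId : agrees TId wid.
Proof.
  diagram_axioms. split.
  - intros a Ha. symmetry. apply L1; in_D.
  - intros a _ _. apply last_Om_iff. discriminate.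
Qed.

Lemma agrees_TBot : agrees TBot wbot.
Proof.
  diagram_axioms. split.
  - intros a Ha. assert (HL : d (SLast TBot) = Fin 0) by (apply (L2 a); in_D).
    unfold wbot. rewrite (proj1 (S5 TBot a ltac:(in_D) Ha ltac:(in_D) ltac:(in_D)))
      by (rewrite HL; apply Fin0_wle).
    symmetry. apply S2; in_D.
  - intros a Ha HL. rewrite (L2 a) in HL by in_D. discriminate.
Qed.

Lemma agrees_TComp t u f g : is_warp f -> is_warp g -> agrees t f -> agrees u g ->
  agrees (TComp t u) (wcomp f g).
Proof.
  intros Hf Hg [Hft Hlt] [Hgu Hlu]. diagram_axioms. split.
  - intros a Ha. unfold wcomp. rewrite Hgu, Hft by in_D. symmetry. apply L3; in_D.
  - intros a Ha HL. destruct (L4 t u) as [HLt HLu]; try in_D.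
    apply last_comp; [exact Hf | exact Hg | apply (Hlt (SApp u a)) | apply (Hlu a)]; in_D.
Qed.

Lemma app_Om_last t a : D (SApp t a) -> d a = Om -> d (SApp t a) = d (SApp t (SLast t)).
Proof. diagram_axioms. intros Ha Ea. apply S5; [in_D.. |]. rewrite Ea. apply wle_Om. Qed.

Lemma agrees_of_Fin t g : is_warp g ->
  (forall b n, D (SApp t b) -> d b = Fin n -> g (Fin n) = d (SApp t b)) ->
  (forall a, D (SApp t a) -> d (SLast t) = Om -> wlast g = Om) ->
  (forall a j, D (SApp t a) -> d a = Om -> d (SApp t (SLast t)) = Fin j -> wle (g Om) (Fin j)) ->
  agrees t g.
Proof.
  intros Hg Hfin Hlast HOm. split; [|exact Hlast]. diagram_axioms.
  intros a Ha. destruct (d a) as [n|] eqn:Ea; [exact (Hfin a n Ha Ea)|].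
  rewrite (app_Om_last t a Ha Ea).
  destruct (classic (d (SLast t) = Om)) as [HL|HL].
  - rewrite (S6 t) by in_D. apply (warp_last_Om_iff g Hg), (Hlast a Ha HL).
  - destruct (d (SLast t)) as [m|] eqn:Em; [|contradiction].
    rewrite <- (Hfin (SLast t) m ltac:(in_D) Em).
    destruct (g (Fin m)) as [j|] eqn:Ej.
    + apply wle_antisym.
      * apply (HOm a j Ha Ea). rewrite <- Ej. symmetry. apply Hfin; [in_D | exact Em].
      * rewrite <- Ej. apply (warp_mono g), wle_Om; exact Hg.
    + exact (warp_Om_of_Fin g m Hg Ej).
Qed.

Lemma agrees_TO t f : is_warp f -> agrees t f -> agrees (TO t) (wo f).
Proof.
  intros Hf [Hval Hlast]. rewrite (wo_eq f Hf). diagram_axioms.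
  apply agrees_of_Fin; [apply wo_expl_warp, Hf | | |].
  - intros b n Hb Hn.
    assert (Hiff : d (SApp (TO t) b) = Om <-> f (Fin n) = Om).
    { rewrite <- Hn, Hval by in_D.
      apply O2; [in_D | exact Hb | in_D | rewrite Hn; apply Fin_wlt_Om]. }
    destruct (O1 t b Hb) as [E|E]; rewrite E.
    + destruct (wo_expl_cases f (Fin n)) as [G|G]; [exact G|].
      apply wo_expl_Fin, Hiff in G. congruence.
    + apply wo_expl_Fin, Hiff, E.
  - intros a Ha HL. pose proof (O3 t ltac:(in_D)) as H. rewrite HL in H.
    contradiction (wlt_irrefl _ H).
  - intros a j Ha Ea Ej.
    destruct (wo_expl_cases f Om) as [E|E]; rewrite E; [apply Fin0_wle|]. exfalso.
    (* Otherwise [f] reaches [Om] at a finite point, so [d (SLast t)] is finite by the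
       induction hypothesis, and O4 makes [d (SApp t a) = f Om] finite. *)
    assert (HL : d (SLast t) <> Om).
    { intro HL. exact (wo_expl_Om_wlast f Hf E (Hlast a ltac:(in_D) HL)). }
    assert (Hfin : wlt (d (SApp t (SLast t))) Om).
    { apply O4; [in_D | in_D | in_D | rewrite Ej; apply Fin_wlt_Om | exact (conj (wle_Om _) HL)]. }
    rewrite <- (app_Om_last t a ltac:(in_D) Ea), <- Hval, Ea, (wo_expl_Om f Om Hf E) in Hfin
      by in_D.
    contradiction (wlt_irrefl _ Hfin).
Qed.

Lemma agrees_TL t f : is_warp f -> agrees t f -> agrees (TL t) (wl f).
Proof.
  intros Hf [Hval Hlast]. rewrite (wl_eq f Hf). diagram_axioms.
  apply agrees_of_Fin; [apply wl_expl_warp, Hf | | |].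
  - intros b [|k] Hb Hn.
    + rewrite (warp_0 _ (wl_expl_warp f Hf)). symmetry. apply S2; in_D.
    + destruct (d (SApp (TL t) b)) as [m|] eqn:Em.
      * assert (Hge : wle (Fin (S k)) (f (Fin m))).
        { rewrite <- Hn, <- Em, Hval by in_D.
          apply Λ1; [in_D | exact Hb | in_D | rewrite Em; apply Fin_wlt_Om]. }
        destruct m as [|m]; [rewrite (warp_0 f Hf) in Hge; simpl in Hge; lia|].
        apply wl_expl_val; [exact Hf | |exact Hge].
        replace (Fin m) with (d (SP (SApp (TL t) b))) by (rewrite S3, Em by in_D; reflexivity).
        rewrite <- Hn, Hval by in_D.
        apply Λ2; [in_D | exact Hb | in_D | rewrite Hn | rewrite Hn | rewrite Em];
          solve [apply Fin_wlt_Om | apply Fin_wlt_Fin; lia].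
      * apply wl_expl_Om; [exact Hf|]. rewrite <- Em, <- Hn, Hval by in_D.
        apply Λ3; [in_D | exact Hb | in_D | rewrite Hn; apply Fin_wlt_Om | exact Em].
  - intros a Ha HL. apply wlast_wl_expl; [exact Hf|]. apply (Hlast (SApp (TL t) a)); [in_D|].
    apply Λ4; [in_D.. | exact HL].
  - intros a j Ha _ Ej. apply wl_expl_Om_le; [exact Hf|]. rewrite <- Ej, Hval by in_D.
    apply Λ5; [in_D | in_D | rewrite Ej; apply Fin_wlt_Om].
Qed.

Lemma agrees_TR t f : is_warp f -> agrees t f -> agrees (TR t) (wr f).
Proof.
  intros Hf [Hval Hlast]. rewrite (wr_eq f Hf). diagram_axioms.
  apply agrees_of_Fin; [apply wr_expl_warp, Hf | | |].
  - intros b [|k] Hb Hn.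
    + rewrite (warp_0 _ (wr_expl_warp f Hf)). symmetry. apply S2; in_D.
    + assert (Hle : wle (f (d (SApp (TR t) b))) (Fin (S k))).
      { rewrite <- Hn, Hval by in_D. apply R1; in_D. }
      destruct (d (SApp (TR t) b)) as [m|] eqn:Em; [|exact (wr_expl_Om f k Hf Hle)].
      apply wr_expl_val; [exact Hf | exact Hle|].
      replace (Fin (S m)) with (d (SS (SApp (TR t) b))) by (rewrite S4, Em by in_D; reflexivity).
      rewrite <- Hn, Hval by in_D.
      apply R2; [in_D | exact Hb | in_D | rewrite Hn | rewrite Hn | rewrite Em];
        solve [apply Fin_wlt_Om | apply Fin_wlt_Fin; lia].
  - intros a Ha HL. apply wlast_wr_expl; [exact Hf|]. apply (Hlast (SApp (TR t) a)); [in_D|].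
    apply R3; [in_D.. | exact HL].
  - intros a j Ha _ Ej. apply wr_expl_Om_le; [exact Hf|].
    replace (Fin (S j)) with (d (SS (SApp (TR t) (SLast (TR t)))))
      by (rewrite S4, Ej by in_D; reflexivity).
    rewrite Hval by in_D. apply R4; [in_D | in_D | rewrite Ej; apply Fin_wlt_Om].
Qed.

Lemma agrees_denote theta : (forall x, is_warp (theta x)) ->
  (forall x, agrees (TVar x) (theta x)) -> forall t, agrees t (denote theta t).
Proof.
  intros Hw Hvar t. induction t; simpl.
  - apply Hvar.
  - apply agrees_TComp; [apply denote_warp, Hw.. | assumption | assumption].
  - apply agrees_TO; [apply denote_warp, Hw | assumption].
  - apply agrees_TL; [apply denote_warp, Hw | assumption].
  - apply agrees_TR; [apply denote_warp, Hw | assumption].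
  - exact agrees_TId.
  - exact agrees_TBot.
Qed.

End Diagram.

Theorem lemma3p17 :
  forall (D : sample -> Prop), saturated D ->
  forall (t : term) (theta : nat -> wb -> wb) (d : sample -> wb),
    (forall x, is_warp (theta x)) ->
    is_diagram D d ->
    (forall x, strongly_extends D d (TVar x) (theta x)) ->
    strongly_extends D d t (denote theta t).
Proof.
  intros D Dsat t theta d Hw Hd Hvar.
  apply strongly_extends_iff_agrees, agrees_denote; [exact Dsat | exact Hd | exact Hw|].
  intro x. apply strongly_extends_iff_agrees, Hvar.
Qed.
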